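(* Let $(\mathcal{A}_\Lambda,\partial_\Lambda)$ and $(\mathcal{A}'_\Lambda,\partial'_\Lambda)$ be filtered Chekanov–Eliashberg DGAs generated by $q_1,\dots,q_n$ and $q_1',\dots,q_n'$ with height filtrations $h,h'$. Let $\bar\phi:(\mathcal{A}_\Lambda,\partial_\Lambda)\to(\mathcal{A}_\Lambda,\partial_\Lambda)$ be a composition of semimonotonic elementary automorphisms, and let $\sigma:\mathcal{A}_\Lambda\to\mathcal{A}'_\Lambda$, $\sigma(q_i)=q_i'$, be a DGA isomorphism such that $\delta\ge\max_i|h'(\sigma(q_i))-h(q_i)|$. Let $\epsilon$ be an augmentation of $\mathcal{A}_\Lambda$ and $\epsilon'=\epsilon\circ\phi^{-1}$. Then $\phi=\sigma\circ\bar\phi$ induces a $2\delta$-interleaving \[ (\phi_1^{\epsilon,\bullet})_\ast: F^\bullet\mathrm{LCH}^\epsilon_\ast(\Lambda)\to F^{\bullet+\delta}\mathrm{LCH}^{\epsilon'}_\ast(\Lambda'). \]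
   Context: A filtered Chekanov–Eliashberg DGA is a Chekanov–Eliashberg DGA (free noncommutative graded algebra over $\mathbb{Z}_2$ on generators, with differential) together with heights $h(q_i)>0$, extended by $h(\text{word})=$ sum of letter heights and $h(\text{sum})=$ max, such that the differential strictly decreases height. An augmentation is an algebra map to $\mathbb{Z}_2$ vanishing in nonzero degrees and killing the image of the differential; $\partial_1^\epsilon$ is the linearized differential on the vector space spanned by the generators. $F^\bullet\mathrm{LCH}^\epsilon_\ast(\Lambda)$ is the persistence module $t\mapsto H_\ast(A^t,\partial_1^\epsilon)$, where $A^t$ is spanned by generators of height $\le t$, with transfer maps induced by inclusion. An elementary automorphism is a chain map $q_j\mapsto q_j+u$, $q_i\mapsto q_i$ ($i\ne j$), $u$ not involving $q_j$; it is semimonotonic if $u$ is a (sum of) word(s) in generators of height strictly less than $h(q_j)$. A $2\delta$-interleaving of persistence modules $U^\bullet,V^\bullet$ consists of maps $\varphi^t:U^t\to V^{t+\delta}$, $\psi^t:V^t\to U^{t+\delta}$ commuting with transfer maps, with $\psi^{t+\delta}\varphi^t$ and $\varphi^{t+\delta}\psi^t$ equal to the transfer maps from $t$ to $t+2\delta$. *)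

From HB Require Import structures.
From mathcomp Require Import all_boot all_order all_algebra.
Set Implicit Arguments. Unset Strict Implicit. Unset Printing Implicit Defensive.
Import Order.TTheory GRing.Theory Num.Theory.
Local Open Scope ring_scope.

(* The free noncommutative (unital) algebra over Z_2 on generators q_0..q_{n-1}.
   A word is a [seq 'I_n]; an algebra element is a formal sum of words,
   represented by a list of words, two lists representing the same element
   iff every word occurs with the same parity ([aeq]).                      *)
Definition word n := seq 'I_n.
Definition alg n := seq (word n).

Definition supp n (a : alg n) (w : word n) : bool := odd (count_mem w a).
Definition aeq n (a b : alg n) : Prop := forall w, supp a w = supp b w.

Definition gen n (i : 'I_n) : alg n := [:: [:: i]].
Definition add n (a b : alg n) : alg n := a ++ b.
Definition mul n (a b : alg n) : alg n := [seq u ++ v | u <- a, v <- b].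

Fixpoint wimg n m (g : 'I_n -> alg m) (w : word n) : alg m :=
  if w is x :: w' then mul (g x) (wimg g w') else [:: [::]].
Definition ext n m (g : 'I_n -> alg m) (a : alg n) : alg m :=
  flatten [seq wimg g w | w <- a].

(* the derivation (over Z_2, Leibniz rule without signs) determined by d *)
Fixpoint dword n (d : 'I_n -> alg n) (w : word n) : alg n :=
  if w is x :: w' then add (mul (d x) [:: w']) (mul [:: [:: x]] (dword d w'))
  else [::].
Definition dif n (d : 'I_n -> alg n) (a : alg n) : alg n :=
  flatten [seq dword d w | w <- a].

Definition wdeg n (deg : 'I_n -> int) (w : word n) : int := \sum_(x <- w) deg x.
Definition wht (R : realFieldType) n (h : 'I_n -> R) (w : word n) : R :=
  \sum_(x <- w) h x.

Definition is_dga n (deg : 'I_n -> int) (d : 'I_n -> alg n) : Prop :=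
  (forall i w, supp (d i) w -> wdeg deg w = deg i - 1) /\
  (forall i, aeq (dif d (d i)) [::]).

(* filtered DGA: heights positive, differential strictly decreases height
   (height of a sum = max of heights of its words, so: every word occurring
   in d q_i has height < h q_i). *)
Definition is_filtered_dga (R : realFieldType) n (deg : 'I_n -> int)
    (d : 'I_n -> alg n) (h : 'I_n -> R) : Prop :=
  is_dga deg d /\ (forall i, 0 < h i) /\
  (forall i w, supp (d i) w -> wht h w < h i).

Definition is_dga_hom n m (deg : 'I_n -> int) (d : 'I_n -> alg n)
    (deg' : 'I_m -> int) (d' : 'I_m -> alg m) (g : 'I_n -> alg m) : Prop :=
  (forall i w, supp (g i) w -> wdeg deg' w = deg i) /\
  (forall i, aeq (dif d' (g i)) (ext g (d i))).

Definition elem_gen n (j : 'I_n) (u : alg n) : 'I_n -> alg n :=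
  fun i => if i == j then add (gen i) u else gen i.

Definition is_elementary n (deg : 'I_n -> int) (d : 'I_n -> alg n)
    (j : 'I_n) (u : alg n) : Prop :=
  (forall w, supp u w -> j \notin w) /\ is_dga_hom deg d deg d (elem_gen j u).

Definition is_semimonotonic (R : realFieldType) n (h : 'I_n -> R)
    (j : 'I_n) (u : alg n) : Prop :=
  forall w, supp u w -> forall x, x \in w -> h x < h j.

(* generator images of the composition e_1 o e_2 o ... o e_k of a list of
   elementary maps *)
Definition comp_gen n (l : seq ('I_n * alg n)) : 'I_n -> alg n :=
  fun i => foldr (fun e acc => ext (elem_gen e.1 e.2) acc) (gen i) l.

Definition aug n (e : 'I_n -> 'F_2) (a : alg n) : 'F_2 :=
  \sum_(w <- a) \prod_(x <- w) e x.
Definition is_aug n (deg : 'I_n -> int) (d : 'I_n -> alg n)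
    (e : 'I_n -> 'F_2) : Prop :=
  (forall i, deg i != 0 -> e i = 0) /\ (forall i, aug e (d i) = 0).

(* coefficient of the generator j in the linear part of the word w after the
   substitution q_x |-> q_x + e(q_x) *)
Fixpoint linw n (e : 'I_n -> 'F_2) (w : word n) (j : 'I_n) : 'F_2 :=
  if w is x :: w' then
    (x == j)%:R * \prod_(y <- w') e y + e x * linw e w' j
  else 0.

(* linearization (w.r.t. the augmentation e of the target) of the algebra map
   with generator images g, as a matrix acting on row vectors:
   row i = linear part of g(q_i).  With g = d and e = epsilon this is the
   linearized differential d_1^epsilon; with g = phi and e = epsilon' it is
   phi_1^epsilon. *)
Definition linmx n m (e : 'I_m -> 'F_2) (g : 'I_n -> alg m) : 'M['F_2]_(n, m) :=
  \matrix_(i, j) \sum_(w <- g i) linw e w j.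

(* A^t = span of generators of height <= t, vectors are row vectors *)
Definition infilt (R : realFieldType) n (h : 'I_n -> R) (t : R)
    (v : 'rV['F_2]_n) : Prop := forall i, v 0 i != 0 -> h i <= t.
Definition cycle (R : realFieldType) n (D : 'M['F_2]_n) (h : 'I_n -> R) t
    (z : 'rV['F_2]_n) : Prop := infilt h t z /\ z *m D = 0.
Definition bnd (R : realFieldType) n (D : 'M['F_2]_n) (h : 'I_n -> R) t
    (b : 'rV['F_2]_n) : Prop := exists v, infilt h t v /\ b = v *m D.
Definition homologous (R : realFieldType) n (D : 'M['F_2]_n) (h : 'I_n -> R) t
    (z z' : 'rV['F_2]_n) : Prop := bnd D h t (z - z').

Definition induces (R : realFieldType) n m (D : 'M['F_2]_n) (h : 'I_n -> R)
    (D' : 'M['F_2]_m) (h' : 'I_m -> R) (s s' : R) (M : 'M['F_2]_(n, m)) : Prop :=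
  (forall z, cycle D h s z -> cycle D' h' s' (z *m M)) /\
  (forall b, bnd D h s b -> bnd D' h' s' (b *m M)).

(* The maps M_* : F^t H(D) -> F^{t+delta} H(D') and N_* : F^t H(D') ->
   F^{t+delta} H(D) form a 2 delta-interleaving of the persistence modules
   t |-> H_*(A^t) (transfer maps induced by inclusion). *)
Definition interleaving (R : realFieldType) n m (D : 'M['F_2]_n) (h : 'I_n -> R)
    (D' : 'M['F_2]_m) (h' : 'I_m -> R) (delta : R)
    (M : 'M['F_2]_(n, m)) (N : 'M['F_2]_(m, n)) : Prop :=
  (forall t, induces D h D' h' t (t + delta) M) /\
  (forall t, induces D' h' D h t (t + delta) N) /\
  (* commutation with transfer maps *)
  (forall s t, s <= t -> forall z, cycle D h s z ->
     homologous D' h' (t + delta) (z *m M) (z *m M)) /\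
  (forall s t, s <= t -> forall z, cycle D' h' s z ->
     homologous D h (t + delta) (z *m N) (z *m N)) /\
  (* compositions are the transfer maps t -> t + 2 delta *)
  (forall t z, cycle D h t z -> homologous D h (t + 2 * delta) (z *m M *m N) z) /\
  (forall t z, cycle D' h' t z -> homologous D' h' (t + 2 * delta) (z *m N *m M) z).

From Pilot Require Import Defs.
From HB Require Import structures.
From mathcomp Require Import all_boot all_order all_algebra.
Import Order.TTheory GRing.Theory Num.Theory.
Local Open Scope ring_scope.
Set Implicit Arguments. Unset Strict Implicit. Unset Printing Implicit Defensive.

(* Linear parts are computed by evaluation in the square-zero extension
   F_2 + F_2^n, realized by the block matrices [[c, v], [0, c]]: sending q_x to
   [[e(q_x), e_x], [0, e(q_x)]] sends a to [[e(a), a_1^e], [0, e(a)]], so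
   augmentations and linearizations obey the chain rule.  Evaluations in rings
   of characteristic 2 only see the parity of word multiplicities, so
   identities up to [aeq] transfer to them, and the chain-map identity, tested
   on all such evaluations, survives composition.  Hence eps' = eps o psi is an
   augmentation and phi_1, psi_1 are inverse chain isomorphisms of the
   linearized complexes.  The linear part of a semimonotonic elementary map
   does not raise heights, hence neither does phibar_1 nor its inverse, while
   sigma moves heights by at most delta; an isomorphism of filtered complexes
   shifting filtrations by at most delta both ways is a 2 delta-interleaving. *)

Lemma F2_addxx (x : 'F_2) : x + x = 0.
Proof. exact/addrr_pchar2/pchar_Fp. Qed.

Lemma mx_F2_addxx m p (A : 'M['F_2]_(m, p)) : A + A = 0.
Proof. by apply/matrixP => i j; rewrite !mxE F2_addxx. Qed.

Lemma sumr_neq0 (V : nmodType) (I : eqType) (r : seq I) (F : I -> V) :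
  \sum_(i <- r) F i != 0 -> exists2 i, i \in r & F i != 0.
Proof.
elim: r => [|i r IH]; first by rewrite big_nil eqxx.
rewrite big_cons; have [Fi0|] := eqVneq (F i) 0; last by exists i; rewrite ?mem_head.
by rewrite Fi0 add0r => /IH[j jr Fj]; exists j; rewrite // inE jr orbT.
Qed.

Section Parity.
Variables (n : nat) (V : zmodType).
Hypothesis addxx : forall x : V, x + x = 0.

Lemma mulrn_odd (x : V) k : x *+ k = x *+ odd k.
Proof.
by rewrite -{1}(odd_double_half k) mulrnDr -mul2n mulrnA mulr2n addxx mul0rn addr0.
Qed.

Lemma supp_mem (a : alg n) w : supp a w -> w \in a.
Proof. by apply: contraLR => /count_memPn; rewrite /supp => ->. Qed.

Lemma big_supp (F : word n -> V) (a : alg n) :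
  \sum_(w <- a) F w = \sum_(w <- undup a | supp a w) F w.
Proof.
rewrite -big_undup_iterop_count [RHS]big_mkcond; apply: eq_bigr => w _.
by rewrite Monoid.iteropE iter_addr_0 mulrn_odd /supp; case: odd.
Qed.

Lemma eq_big_aeq (F : word n -> V) (a b : alg n) :
  aeq a b -> \sum_(w <- a) F w = \sum_(w <- b) F w.
Proof.
move=> ab; rewrite !big_supp -[LHS]big_filter -[RHS]big_filter.
apply/perm_big/uniq_perm; rewrite ?filter_uniq ?undup_uniq // => w.
rewrite !mem_filter !mem_undup -ab.
by case sw: (supp a w) => //=; rewrite !supp_mem // -ab.
Qed.

End Parity.

Definition ev n (S : pzRingType) (f : 'I_n -> S) (a : alg n) : S :=
  \sum_(w <- a) \prod_(x <- w) f x.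

Lemma aug_ev n (e : 'I_n -> 'F_2) a : aug e a = ev e a.
Proof. by []. Qed.

Section Evaluation.
Variables (n : nat) (S : pzRingType).
Implicit Types (f : 'I_n -> S) (a b : alg n) (d : 'I_n -> alg n).

Lemma eq_ev f f' a : f =1 f' -> ev f a = ev f' a.
Proof. by move=> ff'; apply: eq_bigr => w _; apply: eq_bigr => x _; apply: ff'. Qed.

Lemma ev_aeq f a b : (forall x : S, x + x = 0) -> aeq a b -> ev f a = ev f b.
Proof. by move=> addxx; apply: eq_big_aeq. Qed.

Lemma ev_nil f : ev f [::] = 0.
Proof. exact: big_nil. Qed.

Lemma ev_add f a b : ev f (Defs.add a b) = ev f a + ev f b.
Proof. exact: big_cat. Qed.

Lemma ev_word f w : ev f [:: w] = \prod_(x <- w) f x.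
Proof. exact: big_seq1. Qed.

Lemma ev_gen f i : ev f (gen i) = f i.
Proof. by rewrite ev_word big_seq1. Qed.

Lemma ev_mul f a b : ev f (Defs.mul a b) = ev f a * ev f b.
Proof.
rewrite /ev big_allpairs_dep mulr_suml; apply: eq_bigr => u _.
by rewrite mulr_sumr; apply: eq_bigr => v _; rewrite big_cat.
Qed.

Lemma ev_dif f d a : ev f (dif d a) = \sum_(w <- a) ev f (dword d w).
Proof. by rewrite /ev big_flatten big_map. Qed.

Lemma ev_dword_cons f d x w :
  ev f (dword d (x :: w)) =
  ev f (d x) * \prod_(y <- w) f y + f x * ev f (dword d w).
Proof. by rewrite /= ev_add !ev_mul !ev_word big_seq1. Qed.

Lemma ev_dword_cat f d u v :
  ev f (dword d (u ++ v)) =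
  ev f (dword d u) * \prod_(x <- v) f x + \prod_(x <- u) f x * ev f (dword d v).
Proof.
elim: u => [|x u IH]; first by rewrite ev_nil mul0r add0r big_nil mul1r.
rewrite cat_cons !ev_dword_cons IH big_cat /= big_cons.
by rewrite mulrDr mulrDl !mulrA addrA.
Qed.

Lemma ev_dif_mul f d a b :
  ev f (dif d (Defs.mul a b)) = ev f (dif d a) * ev f b + ev f a * ev f (dif d b).
Proof.
rewrite !ev_dif big_allpairs_dep /ev !mulr_suml -big_split; apply: eq_bigr => u _.
by rewrite !mulr_sumr -big_split; apply: eq_bigr => v _; exact: ev_dword_cat.
Qed.

Lemma ev_dif_gen f d i : ev f (dif d (gen i)) = ev f (d i).
Proof. by rewrite ev_dif big_seq1 ev_dword_cons big_nil mulr1 ev_nil mulr0 addr0. Qed.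

Lemma ev_dif_eq0 f d a : (forall x, ev f (d x) = 0) -> ev f (dif d a) = 0.
Proof.
move=> fd0; rewrite ev_dif big1 // => w _.
elim: w => [|x w IH]; first exact: ev_nil.
by rewrite ev_dword_cons fd0 IH mul0r mulr0 addr0.
Qed.

Lemma ev_dif_aeq f d a b :
  (forall x : S, x + x = 0) -> aeq a b -> ev f (dif d a) = ev f (dif d b).
Proof. by move=> addxx ab; rewrite !ev_dif; apply: eq_big_aeq. Qed.

End Evaluation.

Section Substitution.
Variables (n m : nat) (S : pzRingType) (g : 'I_n -> alg m) (f : 'I_m -> S).

Lemma ev_wimg w : ev f (wimg g w) = \prod_(x <- w) ev f (g x).
Proof.
elim: w => [|x w IH]; first by rewrite ev_word !big_nil.
by rewrite /= ev_mul IH big_cons.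
Qed.

Lemma ev_ext a : ev f (ext g a) = ev (fun x => ev f (g x)) a.
Proof. by rewrite /ev big_flatten big_map; apply: eq_bigr => w _; apply: ev_wimg. Qed.

Lemma ev_dif_ext d d' :
  (forall i, ev f (dif d' (g i)) = ev f (ext g (d i))) ->
  forall a, ev f (dif d' (ext g a)) = ev f (ext g (dif d a)).
Proof.
move=> chain a; rewrite ev_ext !ev_dif /ext big_flatten big_map.
apply: eq_bigr => w _; rewrite -ev_dif.
elim: w => [|x w IH]; first by rewrite /= ev_dif big_seq1 !ev_nil.
by rewrite ev_dword_cons [wimg _ _]/= ev_dif_mul chain ev_ext IH ev_wimg.
Qed.

End Substitution.

(* Unlike the identity up to [aeq] required by [is_dga_hom], commuting with the
   differentials after every evaluation in characteristic 2 is visibly closed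
   under composition. *)
Definition chain_map n m (d : 'I_n -> alg n) (d' : 'I_m -> alg m)
    (g : 'I_n -> alg m) :=
  forall (S : pzRingType) (f : 'I_m -> S), (forall x : S, x + x = 0) ->
  forall i, ev f (dif d' (g i)) = ev f (ext g (d i)).

Section ChainMaps.
Variables (n m p : nat).
Variables (d : 'I_n -> alg n) (d' : 'I_m -> alg m) (d'' : 'I_p -> alg p).

Lemma dga_hom_chain_map (deg : 'I_n -> int) (deg' : 'I_m -> int) g :
  is_dga_hom deg d deg' d' g -> chain_map d d' g.
Proof. by move=> [_ hom] S f addxx i; apply: ev_aeq. Qed.

Lemma chain_map_gen : chain_map d d (@gen n).
Proof.
move=> S f _ i; rewrite ev_dif_gen ev_ext.
by apply: eq_ev => x; rewrite ev_gen.
Qed.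

Lemma chain_map_comp g g' : chain_map d d' g -> chain_map d' d'' g' ->
  chain_map d d'' (fun i => ext g' (g i)).
Proof.
move=> chain chain' S f addxx i.
rewrite (ev_dif_ext (chain' S f addxx)) ev_ext chain // ev_ext ev_ext.
by apply: eq_ev => x; rewrite ev_ext.
Qed.

End ChainMaps.

Lemma chain_map_comp_gen n (deg : 'I_n -> int) (d : 'I_n -> alg n) l :
  (forall e, e \in l -> is_elementary deg d e.1 e.2) ->
  chain_map d d (comp_gen l).
Proof.
elim: l => [|[j u] l IH] elem; first exact: chain_map_gen.
apply: (chain_map_comp (g := comp_gen l) (g' := elem_gen j u)).
  by apply: IH => e le; apply: elem; rewrite inE le orbT.
by have [_ hom] := elem (j, u) (mem_head _ _); exact: dga_hom_chain_map hom.
Qed.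

Definition linw_row n (e : 'I_n -> 'F_2) (w : word n) : 'rV['F_2]_n :=
  \row_j linw e w j.

Definition lin n (e : 'I_n -> 'F_2) (a : alg n) : 'rV['F_2]_n :=
  \sum_(w <- a) linw_row e w.

Section LinearPart.
Variable n : nat.
Implicit Types (e : 'I_n -> 'F_2) (a b : alg n) (w : word n).

Lemma linE e a k : lin e a 0 k = \sum_(w <- a) linw e w k.
Proof. by rewrite summxE; apply: eq_bigr => w _; rewrite mxE. Qed.

Lemma row_linmx m e (g : 'I_m -> alg n) i : row i (linmx e g) = lin e (g i).
Proof. by apply/rowP => k; rewrite linE !mxE. Qed.

Lemma linw_row_nil e : linw_row e [::] = 0.
Proof. by apply/rowP => k; rewrite !mxE. Qed.

Lemma linw_row_cons e x w :
  linw_row e (x :: w) =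
  (\prod_(y <- w) e y) *: delta_mx 0 x + e x *: linw_row e w.
Proof. by apply/rowP => k; rewrite !mxE /= mulrC eq_sym. Qed.

Lemma lin_gen e i : lin e (gen i) = delta_mx 0 i.
Proof.
by rewrite /lin big_seq1 linw_row_cons big_nil linw_row_nil scaler0 addr0 scale1r.
Qed.

Lemma lin_add e a b : lin e (Defs.add a b) = lin e a + lin e b.
Proof. exact: big_cat. Qed.

Lemma eq_lin e e' a : e =1 e' -> lin e a = lin e' a.
Proof.
move=> ee'; apply: eq_bigr => w _; apply/rowP => k; rewrite !mxE.
elim: w => [|x w IH] //=; rewrite IH ee'; congr (_ * _ + _).
by apply: eq_bigr => y _; rewrite ee'.
Qed.

Lemma lin_aeq e a b : aeq a b -> lin e a = lin e b.
Proof. exact/eq_big_aeq/mx_F2_addxx. Qed.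

Lemma linw_notin e w k : k \notin w -> linw e w k = 0.
Proof.
elim: w => [|x w IH] //=; rewrite inE negb_or => /andP[kx kw].
by rewrite eq_sym (negbTE kx) mul0r add0r IH // mulr0.
Qed.

Lemma lin_supp e a k : lin e a 0 k != 0 -> exists2 w, supp a w & k \in w.
Proof.
rewrite linE (big_supp F2_addxx) -big_filter => /sumr_neq0[w].
rewrite mem_filter => /andP[aw _] nz; exists w => //.
by apply: contraNT nz => /linw_notin ->.
Qed.

Lemma linmx_gen e : linmx e (@gen n) = 1%:M.
Proof. by apply/row_matrixP => i; rewrite row_linmx lin_gen row1. Qed.

Lemma eq_linmx m e e' (g : 'I_m -> alg n) : e =1 e' -> linmx e g = linmx e' g.
Proof. by move=> ee'; apply/row_matrixP => i; rewrite !row_linmx (eq_lin _ ee'). Qed.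

Lemma eq_linmx_aeq m e (g g' : 'I_m -> alg n) :
  (forall i, aeq (g i) (g' i)) -> linmx e g = linmx e g'.
Proof.
by move=> gg'; apply/row_matrixP => i; rewrite !row_linmx (lin_aeq _ (gg' i)).
Qed.

End LinearPart.

Section DualNumbers.
Variable n : nat.

Definition dualmx (c : 'F_2) (v : 'rV['F_2]_n) : 'M['F_2]_(1 + n) :=
  block_mx c%:M v 0 c%:M.

Lemma dualmx0 : dualmx 0 0 = 0.
Proof. by rewrite /dualmx -scalar_mx_block raddf0. Qed.

Lemma dualmx1 : dualmx 1 0 = 1.
Proof. by rewrite /dualmx -scalar_mx_block. Qed.

Lemma dualmxD c c' v v' : dualmx c v + dualmx c' v' = dualmx (c + c') (v + v').
Proof. by rewrite /dualmx add_block_mx !raddfD addr0. Qed.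

Lemma dualmxM c c' v v' :
  dualmx c v * dualmx c' v' = dualmx (c * c') (c *: v' + c' *: v).
Proof.
rewrite /dualmx -[_ * _]/(mulmx _ _) mulmx_block.
rewrite !mul_scalar_mx !mul_mx_scalar !mulmx0 !mul0mx !scale_scalar_mx.
by rewrite !scaler0 !addr0 add0r.
Qed.

Lemma dualmx_sum I (r : seq I) (c : I -> 'F_2) (v : I -> 'rV_n) :
  \sum_(i <- r) dualmx (c i) (v i) =
  dualmx (\sum_(i <- r) c i) (\sum_(i <- r) v i).
Proof.
elim: r => [|i r IH]; first by rewrite !big_nil dualmx0.
by rewrite !big_cons IH dualmxD.
Qed.

Lemma prod_dualmx m (c : 'I_m -> 'F_2) (V : 'M_(m, n)) (w : word m) :
  \prod_(x <- w) dualmx (c x) (row x V) =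
  dualmx (\prod_(x <- w) c x) (linw_row c w *m V).
Proof.
elim: w => [|x w IH]; first by rewrite !big_nil linw_row_nil mul0mx dualmx1.
rewrite !big_cons IH dualmxM linw_row_cons mulmxDl -!scalemxAl -rowE.
by rewrite addrC.
Qed.

Lemma ev_dualmx m (c : 'I_m -> 'F_2) (V : 'M_(m, n)) (a : alg m) :
  ev (fun x => dualmx (c x) (row x V)) a = dualmx (aug c a) (lin c a *m V).
Proof.
by rewrite /ev (eq_bigr _ (fun w _ => prod_dualmx c V w)) dualmx_sum mulmx_suml.
Qed.

(* The substitution q_x |-> e(q_x) + q_x, truncated at first order. *)
Definition dualgen (e : 'I_n -> 'F_2) (x : 'I_n) := dualmx (e x) (delta_mx 0 x).

Lemma ev_dualgen e a : ev (dualgen e) a = dualmx (aug e a) (lin e a).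
Proof. by rewrite -[lin e a]mulmx1 -ev_dualmx; apply: eq_ev => x; rewrite row1. Qed.

Lemma ursubmx_dualmx c v : ursubmx (dualmx c v) = v.
Proof. exact: block_mxKur. Qed.

Lemma lin_ev e a : lin e a = ursubmx (ev (dualgen e) a).
Proof. by rewrite ev_dualgen ursubmx_dualmx. Qed.

Lemma lin_ext m e (g : 'I_m -> alg n) (a : alg m) :
  lin e (ext g a) = lin (fun x => aug e (g x)) a *m linmx e g.
Proof.
pose F x := dualmx (aug e (g x)) (row x (linmx e g)).
rewrite lin_ev ev_ext (eq_ev (f' := F)); first by rewrite ev_dualmx ursubmx_dualmx.
by move=> x; rewrite /F ev_dualgen row_linmx.
Qed.

Lemma ev_dualgen_word e w :
  ev (dualgen e) [:: w] = dualmx (\prod_(y <- w) e y) (linw_row e w).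
Proof. by rewrite ev_dualgen aug_ev ev_word /lin big_seq1. Qed.

Lemma lin_dif e (d : 'I_n -> alg n) a :
  (forall x, aug e (d x) = 0) -> lin e (dif d a) = lin e a *m linmx e d.
Proof.
move=> ed0.
have dword_lin w :
    ev (dualgen e) (dword d w) = dualmx 0 (linw_row e w *m linmx e d).
  elim: w => [|x w IH]; first by rewrite ev_nil linw_row_nil mul0mx dualmx0.
  rewrite [dword _ _]/= ev_add !ev_mul IH ev_dualgen ed0 ev_dualgen_word.
  rewrite -/(gen x) ev_gen.
  rewrite !dualmxM dualmxD linw_row_cons mulmxDl -!scalemxAl -rowE row_linmx.
  by rewrite mul0r mulr0 addr0 !scale0r add0r addr0.
rewrite lin_ev ev_dif (eq_bigr _ (fun w _ => dword_lin w)) dualmx_sum.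
by rewrite ursubmx_dualmx mulmx_suml.
Qed.

End DualNumbers.

Lemma linmx_comp n m p (e : 'I_n -> 'F_2) (g : 'I_m -> alg n)
    (f : 'I_p -> alg m) :
  linmx e (fun i => ext g (f i)) = linmx (fun x => aug e (g x)) f *m linmx e g.
Proof. by apply/row_matrixP => i; rewrite row_mul !row_linmx lin_ext. Qed.

Lemma linmx_dif n m (e : 'I_n -> 'F_2) (d : 'I_n -> alg n) (g : 'I_m -> alg n) :
  (forall x, aug e (d x) = 0) ->
  linmx e (fun i => dif d (g i)) = linmx e g *m linmx e d.
Proof. by move=> ed0; apply/row_matrixP => i; rewrite row_mul !row_linmx lin_dif. Qed.

Section InverseChainMaps.
Variables (n m : nat) (d : 'I_n -> alg n) (d' : 'I_m -> alg m).
Variables (phi : 'I_n -> alg m) (psi : 'I_m -> alg n) (eps : 'I_n -> 'F_2).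
Hypothesis chain_phi : chain_map d d' phi.
Hypothesis psi_phi : forall i, aeq (ext psi (phi i)) (gen i).
Hypothesis phi_psi : forall i, aeq (ext phi (psi i)) (gen i).
Hypothesis eps_d : forall i, aug eps (d i) = 0.
Let eps' i := aug eps (psi i).

Lemma aug_phi i : aug eps' (phi i) = eps i.
Proof. by rewrite aug_ev -ev_ext (ev_aeq _ F2_addxx (psi_phi i)) ev_gen. Qed.

Lemma aug_d' i : aug eps' (d' i) = 0.
Proof.
rewrite aug_ev -ev_dif_gen -(ev_dif_aeq _ _ F2_addxx (phi_psi i)).
rewrite (ev_dif_ext (chain_phi _ F2_addxx)) ev_ext (eq_ev _ aug_phi).
exact: ev_dif_eq0.
Qed.

Lemma linmx_phi_psi : linmx eps' phi *m linmx eps psi = 1%:M.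
Proof. by rewrite -linmx_comp (eq_linmx_aeq _ psi_phi) linmx_gen. Qed.

Lemma linmx_psi_phi : linmx eps psi *m linmx eps' phi = 1%:M.
Proof.
by rewrite -(eq_linmx psi aug_phi) -linmx_comp (eq_linmx_aeq _ phi_psi) linmx_gen.
Qed.

Lemma linmx_phi_chain :
  linmx eps' phi *m linmx eps' d' = linmx eps d *m linmx eps' phi.
Proof.
rewrite -(eq_linmx d aug_phi) -linmx_comp -linmx_dif; last exact: aug_d'.
apply/row_matrixP => i; rewrite !row_linmx !lin_ev.
by rewrite (chain_phi _ (@mx_F2_addxx _ _)).
Qed.

End InverseChainMaps.

Definition filt_mx (R : numDomainType) n m (h : 'I_n -> R) (h' : 'I_m -> R)
    (c : R) (A : 'M['F_2]_(n, m)) : bool :=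
  [forall i, forall k, (A i k != 0) ==> (h' k <= h i + c)].

Section FiltrationShift.
Variable R : numDomainType.

Lemma filt_mxP n m (h : 'I_n -> R) (h' : 'I_m -> R) c (A : 'M['F_2]_(n, m)) :
  reflect (forall i k, A i k != 0 -> h' k <= h i + c) (filt_mx h h' c A).
Proof.
apply: (iffP forallP) => [hA i k|hA i].
  by move/forallP/(_ k)/implyP: (hA i).
by apply/forallP => k; apply/implyP/hA.
Qed.

Lemma filt_mx1 n (h h' : 'I_n -> R) c :
  (forall k, h' k <= h k + c) -> filt_mx h h' c 1%:M.
Proof.
move=> hh'; apply/filt_mxP => i k; rewrite mxE.
by have [->|_] := eqVneq i k; rewrite ?mulr0n ?eqxx.
Qed.

Lemma filt_mx_mul n m p (h : 'I_n -> R) (h' : 'I_m -> R) (h'' : 'I_p -> R)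
    c c'
    (A : 'M['F_2]_(n, m)) (B : 'M['F_2]_(m, p)) :
  filt_mx h h' c A -> filt_mx h' h'' c' B -> filt_mx h h'' (c + c') (A *m B).
Proof.
move=> /filt_mxP hA /filt_mxP hB; apply/filt_mxP => i k.
rewrite mxE => /sumr_neq0[j _]; rewrite mulf_eq0 negb_or => /andP[Aij Bjk].
by rewrite addrA (le_trans (hB _ _ Bjk)) // lerD2r hA.
Qed.

Lemma filt_mx_inv n (h : 'I_n -> R) (A B : 'M['F_2]_n) :
  A *m B = 1%:M -> filt_mx h h 0 A -> filt_mx h h 0 B.
Proof.
(* Right multiplication by [A] is injective, hence bijective, on the finite
   set of height-preserving matrices; [B] is the preimage of [1]. *)
move=> AB hA; pose mulA (X : 'M['F_2]_n) := X *m A.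
pose W := [set X | filt_mx h h 0 X].
have mulA_inj : injective mulA.
  by apply: (can_inj (g := mulmx^~ B)) => X; rewrite /mulA -mulmxA AB mulmx1.
have mulA_W : mulA @: W = W.
  apply/eqP; rewrite eqEcard card_imset // leqnn andbT.
  apply/subsetP => Y /imsetP[X]; rewrite !inE => hX ->.
  by have := filt_mx_mul hX hA; rewrite addr0.
have : 1%:M \in mulA @: W by rewrite mulA_W inE filt_mx1 // => k; rewrite addr0.
case/imsetP => X; rewrite inE => hX XA.
by rewrite -[B]mul1mx XA -mulmxA AB mulmx1.
Qed.

End FiltrationShift.

Lemma filt_mx_elem (R : realFieldType) n (h : 'I_n -> R) e j u :
  is_semimonotonic h j u -> filt_mx h h 0 (linmx e (elem_gen j u)).
Proof.
move=> semi; apply/filt_mxP => i k; rewrite addr0 mxE -linE /elem_gen.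
have [->|_] := eqVneq i j; rewrite ?lin_add lin_gen !mxE eqxx /=.
  have [-> //|kj] := eqVneq k j; rewrite mulr0n add0r => /lin_supp[w uw kw].
  exact/ltW/(semi w uw k kw).
by have [->|] := eqVneq k i; rewrite ?mulr0n ?eqxx.
Qed.

Lemma filt_mx_comp_gen (R : realFieldType) n (h : 'I_n -> R) l :
  (forall e, e \in l -> is_semimonotonic h e.1 e.2) ->
  forall e, filt_mx h h 0 (linmx e (comp_gen l)).
Proof.
elim: l => [|[j u] l IH] semi e.
  by rewrite linmx_gen filt_mx1 // => k; rewrite addr0.
have -> : linmx e (comp_gen ((j, u) :: l)) =
    linmx (fun x => aug e (elem_gen j u x)) (comp_gen l) *m
    linmx e (elem_gen j u).
  exact: linmx_comp.
rewrite -[0 : R]addr0; apply: filt_mx_mul.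
  by apply: IH => a la; apply: semi; rewrite inE la orbT.
by apply: filt_mx_elem; apply: (semi (j, u)); rewrite mem_head.
Qed.

Lemma filt_mx_infilt (R : realFieldType) n m (h : 'I_n -> R) (h' : 'I_m -> R) c
    (A : 'M['F_2]_(n, m)) t v :
  filt_mx h h' c A -> infilt h t v -> infilt h' (t + c) (v *m A).
Proof.
move=> /filt_mxP hA hv k; rewrite mxE => /sumr_neq0[i _].
rewrite mulf_eq0 negb_or => /andP[vi Aik].
by rewrite (le_trans (hA _ _ Aik)) // lerD2r hv.
Qed.

Section Interleaving.
Variables (R : realFieldType) (n m : nat).
Variables (D : 'M['F_2]_n) (h : 'I_n -> R) (D' : 'M['F_2]_m) (h' : 'I_m -> R).

Lemma homologous_refl t z : homologous D h t z z.
Proof. by exists 0; split=> [i|]; rewrite ?mxE ?eqxx // subrr mul0mx. Qed.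

Lemma induces_chain_mx s c (A : 'M['F_2]_(n, m)) :
  A *m D' = D *m A -> filt_mx h h' c A -> induces D h D' h' s (s + c) A.
Proof.
move=> AD hA; split=> [z [zs zD]|_ [v [vs ->]]].
  by split; [exact: filt_mx_infilt hA zs | rewrite -mulmxA AD mulmxA zD mul0mx].
by exists (v *m A); split; [exact: filt_mx_infilt hA vs | rewrite -!mulmxA AD].
Qed.

End Interleaving.

Lemma filt_chain_iso_interleaving (R : realFieldType) n m
    (D : 'M['F_2]_n) (h : 'I_n -> R) (D' : 'M['F_2]_m) (h' : 'I_m -> R) delta
    (M : 'M['F_2]_(n, m)) (N : 'M['F_2]_(m, n)) :
  M *m N = 1%:M -> N *m M = 1%:M -> M *m D' = D *m M ->
  filt_mx h h' delta M -> filt_mx h' h delta N ->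
  interleaving D h D' h' delta M N.
Proof.
move=> MN NM MD hM hN.
have ND : N *m D = D' *m N.
  rewrite -[N *m D]mulmx1 -MN !mulmxA -[N *m D *m M]mulmxA -MD.
  by rewrite !mulmxA NM mul1mx.
split; [|split; [|split; [|split; [|split]]]].
- by move=> t; apply: induces_chain_mx.
- by move=> t; apply: induces_chain_mx.
- by move=> s t _ z _; apply: homologous_refl.
- by move=> s t _ z _; apply: homologous_refl.
- by move=> t z _; rewrite -mulmxA MN mulmx1; apply: homologous_refl.
- by move=> t z _; rewrite -mulmxA NM mulmx1; apply: homologous_refl.
Qed.

Theorem proposition4p4 (R : realFieldType) (n : nat)
    (deg : 'I_n -> int) (d : 'I_n -> alg n) (h : 'I_n -> R)
    (deg' : 'I_n -> int) (d' : 'I_n -> alg n) (h' : 'I_n -> R)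
    (l : seq ('I_n * alg n)) (psi : 'I_n -> alg n)
    (eps : 'I_n -> 'F_2) (delta : R) :
  is_filtered_dga deg d h ->
  is_filtered_dga deg' d' h' ->
  (* phibar is a composition of semimonotonic elementary automorphisms *)
  (forall e, e \in l -> is_elementary deg d e.1 e.2 /\ is_semimonotonic h e.1 e.2) ->
  (* sigma : q_i |-> q_i' is a DGA isomorphism *)
  is_dga_hom deg d deg' d' (@gen n) ->
  (forall i, `|h' i - h i| <= delta) ->
  let phi := fun i => ext (@gen n) (comp_gen l i) in
  (* psi = phi^{-1} *)
  (forall i, aeq (ext phi (psi i)) (gen i)) ->
  (forall i, aeq (ext psi (phi i)) (gen i)) ->
  is_aug deg d eps ->
  let eps' := fun i => aug eps (psi i) in
  interleaving (linmx eps d) h (linmx eps' d') h' delta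
    (linmx eps' phi) (linmx eps psi).
Proof.
move=> _ _ hl sigma_hom hdelta phi phi_psi psi_phi [_ eps_d] eps'.
have elem e : e \in l -> is_elementary deg d e.1 e.2 by case/hl.
have semi e : e \in l -> is_semimonotonic h e.1 e.2 by case/hl.
have chain_phi : chain_map d d' phi :=
  chain_map_comp (chain_map_comp_gen elem) (dga_hom_chain_map sigma_hom).
have phibar_filt : filt_mx h h 0 (linmx eps' phi).
  by rewrite linmx_comp linmx_gen mulmx1; apply: filt_mx_comp_gen.
have MN := linmx_phi_psi eps psi_phi.
have [hh' h'h] :
    (forall k, h' k <= h k + delta) /\ (forall k, h k <= h' k + delta).
  by split=> k; have := hdelta k; rewrite ler_distl lerBlDr => /andP[].
apply: filt_chain_iso_interleaving => //.
- exact: linmx_psi_phi.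
- exact: linmx_phi_chain.
- rewrite -[linmx _ _]mulmx1 -[delta]add0r.
  exact: filt_mx_mul phibar_filt (filt_mx1 hh').
- rewrite -[linmx _ _]mul1mx -[delta]addr0; apply: filt_mx_mul (filt_mx1 h'h) _.
  exact: filt_mx_inv MN phibar_filt.
Qed.
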